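(* Let $1\le k<\infty$, and let $T=S_k+F$ on the Hardy space $H^2(\mathbb{D})$, where $S_kz^n=z^{n+k}$ ($n\ge0$) and $F$ is defined by $F(1)=\alpha_0+\alpha_1z+\cdots+\alpha_{k-1}z^{k-1}+(\alpha_k-1)z^k$ and $F(z^n)=0$ for $n\ge1$, with $\alpha_0,\dots,\alpha_k\in\mathbb{C}$ and $0<|\alpha_0|\le1$. Then $T$ is analytic if and only if $\alpha_j\neq0$ for some $1\le j\le k$.
   Context: $H^2(\mathbb{D})$ is the Hardy space with orthonormal basis $\{z^n\}_{n\ge0}$. An operator $T$ on a Hilbert space $\mathcal{H}$ is analytic if $\bigcap_{m\ge1}T^m\mathcal{H}=\{0\}$. *)

From mathcomp Require Import all_boot all_order all_algebra.
From mathcomp Require Import reals.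
From mathcomp Require Export complex.
Set Implicit Arguments. Unset Strict Implicit. Unset Printing Implicit Defensive.
Import Order.TTheory GRing.Theory Num.Theory.
Local Open Scope ring_scope.

(* H^2(D) is identified with l^2(N) via Taylor coefficients:
   f = sum_n u n z^n  <->  u : nat -> R[i] with sum_n |u n|^2 < oo. *)
Definition hardy (R : realType) (u : nat -> R[i]) : Prop :=
  exists M : R[i], forall N : nat, \sum_(n < N) `|u n| ^+ 2 <= M.

Definition Fcoef (R : realType) (k : nat) (alpha : nat -> R[i]) (n : nat) : R[i] :=
  if (n < k)%N then alpha n else if n == k then alpha k - 1 else 0.

Definition Sk (R : realType) (k : nat) (u : nat -> R[i]) (n : nat) : R[i] :=
  if (k <= n)%N then u (n - k)%N else 0.

(* F z^0 = F(1), F z^n = 0 for n >= 1; so F u = u 0 * F(1) *)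
Definition Fop (R : realType) (k : nat) (alpha : nat -> R[i]) (u : nat -> R[i])
  (n : nat) : R[i] := u 0%N * Fcoef k alpha n.

Definition Top (R : realType) (k : nat) (alpha : nat -> R[i]) (u : nat -> R[i])
  (n : nat) : R[i] := Sk k u n + Fop k alpha u n.

Definition analytic (R : realType) (T : (nat -> R[i]) -> (nat -> R[i])) : Prop :=
  forall v : nat -> R[i], hardy v ->
    (forall m : nat, (1 <= m)%N ->
       exists u : nat -> R[i], hardy u /\ forall n, v n = iter m T u n) ->
    forall n, v n = 0.

(* On Taylor coefficients T acts by (Tu)_0 = a_0 u_0, (Tu)_j = a_j u_0 for
   1 <= j <= k and (Tu)_n = u_(n-k) for n > k, so T is injective as soon as
   a_0 <> 0.  If a_1 = ... = a_k = 0, the constant function is an eigenvector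
   for the eigenvalue a_0 <> 0 and thus lies in every range T^m H^2.
   Otherwise, injectivity gives every v in all the ranges a preimage that is
   again in all the ranges; iterating yields v_(mk+j) = v_0 a_j / a_0^(m+1),
   and since |a_0| <= 1 these coefficients are bounded below in modulus, which
   is incompatible with square summability unless v_0 = 0.  But then every
   coefficient v_(mk+j) vanishes. *)

From mathcomp Require Import all_boot all_order all_algebra reals complex boolp.
Set Implicit Arguments.
Unset Strict Implicit.
Unset Printing Implicit Defensive.

Import Order.TTheory GRing.Theory Num.Theory.
Local Open Scope ring_scope.

Lemma natmul_unbounded (R : archiNumFieldType) (c M : R) :
  0 < c -> ~ (forall N, c *+ N <= M).
Proof.
move=> c_gt0 le_M.
have M_ge0 : 0 <= M by have := le_M 0%N; rewrite mulr0n.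
have := le_M (Num.Def.archi_bound (M / c)).
rewrite -mulr_natl -ler_pdivlMr //.
by rewrite lt_geF // archi_boundP // divr_ge0 // ltW.
Qed.

Lemma complex_natmul_unbounded (R : realType) (c M : R[i]) :
  0 < c -> ~ (forall N, c *+ N <= M).
Proof.
rewrite ltcE /= => /andP[_ Rec_gt0] le_M.
apply: (natmul_unbounded (M := complex.Re M) Rec_gt0) => N.
by have := le_M N; rewrite lecE => /andP[_]; rewrite raddfMn.
Qed.

Lemma hardy_subseq_sqr_unbounded (R : realType) (v : nat -> R[i]) (f : nat -> nat)
    (c : R[i]) :
  hardy v -> (forall N, (f N < f N.+1)%N) -> 0 < c ->
  ~ (forall N, c <= `|v (f N)| ^+ 2).
Proof.
move=> [M sum_le_M] f_incr c_gt0 c_le.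
have sum_ge N : c *+ N <= \sum_(0 <= n < f N) `|v n| ^+ 2.
  elim: N => [|N IH]; first by rewrite mulr0n sumr_ge0 // => n _; rewrite exprn_ge0.
  rewrite (big_cat_nat (leq0n _) (ltnW (f_incr N))) (big_ltn (f_incr N)) /= addrA mulrSr.
  by rewrite (le_trans (lerD IH (c_le N))) // lerDl sumr_ge0 // => n _; rewrite exprn_ge0.
apply: (complex_natmul_unbounded c_gt0) => N.
by rewrite (le_trans (sum_ge N)) // big_mkord.
Qed.

Definition in_all_ranges (X : Type) (T : X -> X) (v : X) : Prop :=
  forall m, (0 < m)%N -> exists u, v = iter m T u.

Lemma in_all_ranges_preimage (X : Type) (T : X -> X) (v : X) :
  injective T -> in_all_ranges T v -> exists2 u, v = T u & in_all_ranges T u.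
Proof.
move=> injT vT; have [u vTu] := vT 1%N isT.
exists u => // m _; have [w vTw] := vT m.+1 isT.
by exists w; apply: injT; rewrite -[T u]vTu vTw.
Qed.

Definition hconst (R : realType) (c : R[i]) (n : nat) : R[i] :=
  if n == 0%N then c else 0.

Lemma hardy_hconst (R : realType) (c : R[i]) : hardy (hconst c).
Proof.
exists (`|c| ^+ 2) => -[|N]; first by rewrite big_ord0 exprn_ge0.
by rewrite big_ord_recl big1 ?addr0 // => n _; rewrite /hconst normr0 expr0n.
Qed.

Lemma not_analytic_hconst_eigen (R : realType) (T : (nat -> R[i]) -> nat -> R[i])
    (lambda : R[i]) :
  lambda != 0 -> (forall c, T (hconst c) = hconst (c * lambda)) -> ~ analytic T.
Proof.
move=> lambda_neq0 T_hconst T_analytic.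
have iter_hconst m c : iter m T (hconst c) = hconst (c * lambda ^+ m).
  by elim: m c => [|m IH] c; rewrite ?mulr1 // iterS IH T_hconst exprSr mulrA.
suff /eqP : hconst 1 0%N = 0 :> R[i] by rewrite oner_eq0.
apply: T_analytic (hardy_hconst 1) _ 0%N => m _.
exists (hconst (lambda ^- m)); split; first exact: hardy_hconst.
by move=> n; rewrite iter_hconst mulVf // expf_neq0.
Qed.

Section ShiftPlusRankOne.
Variables (R : realType) (k : nat) (alpha : nat -> R[i]).
Hypothesis k_gt0 : (0 < k)%N.

Local Notation T := (Top k alpha).

Lemma Top_coef0 u : T u 0%N = u 0%N * alpha 0%N.
Proof. by rewrite /Top /Sk /Fop /Fcoef leqn0 k_gt0 (negPf (lt0n_neq0 k_gt0)) add0r. Qed.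

Lemma Top_coef_head u j : (0 < j <= k)%N -> T u j = u 0%N * alpha j.
Proof.
case/andP=> j_gt0; rewrite leq_eqVlt => /predU1P[->|j_lt_k].
  by rewrite /Top /Sk /Fop /Fcoef leqnn subnn ltnn eqxx mulrBr mulr1 addrC subrK.
by rewrite /Top /Sk /Fop /Fcoef leqNgt j_lt_k add0r.
Qed.

Lemma Top_coef_tail u n : (k < n)%N -> T u n = u (n - k)%N.
Proof.
move=> k_lt_n; rewrite /Top /Sk /Fop /Fcoef (ltnW k_lt_n) ltnNge (ltnW k_lt_n).
by rewrite gtn_eqF // mulr0 addr0.
Qed.

Lemma Top_hconst c :
  (forall j, (0 < j <= k)%N -> alpha j = 0) -> T (hconst c) = hconst (c * alpha 0%N).
Proof.
move=> alpha_head0; apply: funext => -[|n]; first by rewrite Top_coef0.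
case: (leqP n.+1 k) => [n_lt_k|k_le_n].
  by rewrite Top_coef_head // alpha_head0 // mulr0.
by rewrite Top_coef_tail // /hconst subn_eq0 leqNgt k_le_n.
Qed.

Hypothesis alpha0_neq0 : alpha 0%N != 0.

Lemma Top_inj : injective T.
Proof.
move=> a b Tab; have ab0 : a 0%N = b 0%N.
  by apply: (mulIf alpha0_neq0); rewrite -!Top_coef0 Tab.
apply: funext => -[//|n]; have := congr1 (fun w => w (k + n.+1)%N) Tab.
by rewrite !Top_coef_tail ?addKn // addnS ltnS leq_addr.
Qed.

Lemma in_all_ranges_Top_coef v m j : in_all_ranges T v -> (0 < j <= k)%N ->
  v (m * k + j)%N = v 0%N * alpha j / alpha 0%N ^+ m.+1.
Proof.
elim: m v => [|m IH] v /(in_all_ranges_preimage Top_inj)[u -> uT] j_range.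
  by rewrite mul0n add0n Top_coef_head // Top_coef0 expr1 mulrAC mulfK.
rewrite Top_coef_tail; last first.
  rewrite mulSn -addnA -[ltnLHS]addn0 ltn_add2l; case/andP: j_range => j_gt0 _.
  exact: ltn_addl.
rewrite mulSn -addnA addKn IH // Top_coef0 [in RHS]exprS invfM.
by rewrite [_ * _ * alpha j]mulrAC mulrA mulfK.
Qed.

Lemma in_all_ranges_Top_eq0 v : in_all_ranges T v -> v 0%N = 0 -> forall n, v n = 0.
Proof.
move=> vT v0 [//|n]; rewrite (divn_eq n k) -addnS in_all_ranges_Top_coef //.
  by rewrite v0 !mul0r.
by rewrite /= ltn_mod.
Qed.

Lemma hardy_in_all_ranges_Top_coef0_eq0 v j :
  `|alpha 0%N| <= 1 -> (0 < j <= k)%N -> alpha j != 0 ->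
  hardy v -> in_all_ranges T v -> v 0%N = 0.
Proof.
move=> alpha0_le1 j_range alphaj_neq0 hv vT; apply/eqP; apply: contraT => v0_neq0.
set c := `|v 0%N * alpha j| ^+ 2.
have c_gt0 : 0 < c by rewrite exprn_gt0 // normr_gt0 mulf_neq0.
have f_incr N : (N * k + j < N.+1 * k + j)%N by rewrite ltn_add2r ltn_pmul2r.
case: (hardy_subseq_sqr_unbounded hv f_incr c_gt0) => N.
rewrite in_all_ranges_Top_coef // normrM exprMn -[leLHS]mulr1 ler_wpM2l ?exprn_ge0 //.
by rewrite normfV normrX exprVn -exprM invf_ge1 ?exprn_gt0 ?normr_gt0 // exprn_ile1.
Qed.

End ShiftPlusRankOne.

Theorem corollary4p5 (R : realType) (k : nat) (alpha : nat -> R[i]) :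
  (1 <= k)%N ->
  0 < `|alpha 0%N| <= 1 ->
  (analytic (Top k alpha) <->
   exists j : nat, [/\ (1 <= j)%N, (j <= k)%N & alpha j != 0]).
Proof.
move=> k_gt0 /andP[alpha0_gt0 alpha0_le1].
have alpha0_neq0 : alpha 0%N != 0 by rewrite -normr_gt0.
split=> [T_analytic | [j [j_gt0 j_le_k alphaj_neq0]] v hv v_ranges].
  apply: contrapT => no_head.
  apply: (not_analytic_hconst_eigen alpha0_neq0 _ T_analytic) => c.
  apply: Top_hconst => // j /andP[j_gt0 j_le_k]; apply/eqP; apply: contraT => alphaj_neq0.
  by case: no_head; exists j.
have vT : in_all_ranges (Top k alpha) v.
  by move=> m m_gt0; have [u [_ vu]] := v_ranges m m_gt0; exists u; apply: funext.
have j_range : (0 < j <= k)%N by rewrite j_gt0.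
have v0 := hardy_in_all_ranges_Top_coef0_eq0 k_gt0 alpha0_neq0 alpha0_le1 j_range
  alphaj_neq0 hv vT.
exact: (in_all_ranges_Top_eq0 k_gt0 alpha0_neq0 vT v0).
Qed.
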